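(* Let $h\in C[0,1]$, $c\in\mathbb R$, and let $q\in C[0,1]$ with $q>0$ on $(0,1)$. If $z\in C^1(0,1)$ satisfies $\dot z(\varphi)=h(\varphi)-c-q(\varphi)/z(\varphi)$ and $z(\varphi)<0$ for all $\varphi\in(0,1)$, then the limits $z(0^+)$ and $z(1^-)$ exist and are finite (and lie in $(-\infty,0]$), so $z$ extends continuously to $[0,1]$. *)

From HB Require Import structures.
From mathcomp Require Import all_boot all_order all_algebra.
From mathcomp Require Import all_classical all_reals all_analysis.
Set Implicit Arguments.
Unset Strict Implicit.
Unset Printing Implicit Defensive.

From HB Require Import structures.
From mathcomp Require Import all_boot all_order all_algebra.
From mathcomp Require Import all_classical all_reals all_analysis.
From mathcomp Require Import ring lra.
Set Implicit Arguments.
Unset Strict Implicit.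
Unset Printing Implicit Defensive.
Import Order.TTheory GRing.Theory Num.Theory.
Import numFieldNormedType.Exports.
Local Open Scope classical_set_scope.
Local Open Scope ring_scope.

(* Let h, q be continuous on [0, 1] with q > 0 on ]0, 1[, and let z < 0 solve
   z' = h - c - q / z on ]0, 1[.  Choose bounds |h - c| <= A and q <= Q.

   - Since -q/z > 0, the "drifted" function z t + A t has derivative
     h - c - q/z + A >= 0, hence is nondecreasing on ]0, 1[.
   - The "energy" (1 + z^2) exp((A + 2Q) t) is nondecreasing as well: its
     derivative is exp(..) * ((A + 2Q)(1 + z^2) + 2 z (h - c) - 2 q) >= 0.
     Since -z <= 1 + z^2 <= energy, z is bounded below on ]0, 1/2].
   - A nondecreasing function that is bounded below (resp. above) has a limit
     at the left (resp. right) end of its interval; the drifted function is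
     bounded below near 0 by the energy bound and above by A since z < 0.
   - Subtracting the linear term A t gives the limits of z, which are <= 0
     because z < 0. *)

(* Pointwise sign of the energy derivative: with z < 0, |e| <= A and 0 <= p <= Q,
   (A + 2Q)(1 + z^2) + 2z(e - p/z) = A(1 + z)^2 + 2(ze - zA) + 2(Q - p) + 2Qz^2. *)
Lemma energy_rate_ge0 (R : realFieldType) (z e p A Q : R) :
  z < 0 -> `|e| <= A -> 0 <= p -> p <= Q ->
  0 <= (A + 2 * Q) * (1 + z ^+ 2) + 2 * z * (e - p / z).
Proof.
move=> z_lt0 eA p0 pQ.
have ze : z * A <= z * e.
  by rewrite ler_wnM2l ?(ltW z_lt0) //; exact: le_trans (ler_norm e) eA.
have sq : 0 <= A * (1 + z) ^+ 2 by rewrite mulr_ge0 ?sqr_ge0 // (le_trans _ eA).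
have Qz : 0 <= Q * z ^+ 2 by rewrite mulr_ge0 ?sqr_ge0 // (le_trans p0).
have -> : (A + 2 * Q) * (1 + z ^+ 2) + 2 * z * (e - p / z)
  = A * (1 + z) ^+ 2 + 2 * (z * e - z * A) + 2 * (Q - p) + 2 * (Q * z ^+ 2).
  by field; rewrite lt_eqF.
lra.
Qed.

Lemma is_derive_energy (R : realType) (z : R -> R) (k x a : R) :
  is_derive x 1 z a ->
  is_derive x 1 (fun t => (1 + z t ^+ 2) * expR (k * t))
    (expR (k * x) * (k * (1 + z x ^+ 2) + 2 * z x * a)).
Proof.
move=> dz.
have dlin : is_derive x 1 (fun t : R => k * t) k.
  by have := is_deriveZ k (is_derive_id x 1); rewrite /GRing.scale /= mulr1.
have dexp : is_derive x 1 (expR \o (fun t => k * t)) (expR (k * x) * k).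
  exact: is_derive1_comp (is_derive_expR (k * x)) dlin.
have dsq : is_derive x 1 (fun t => 1 + z t ^+ 2) (0 + (2%:R * z x ^+ 1) *: a).
  by have := is_deriveD (is_derive_cst (1 : R) x 1) (is_deriveX 2 dz).
apply: is_derive_eq (is_deriveM dsq dexp) _.
rewrite /GRing.scale /= expr1; ring.
Qed.

Lemma derive1_ge0_nondecreasing (R : realType) (f : R -> R) (a b : R) :
  (forall x, x \in `]a, b[ -> derivable f x 1) ->
  (forall x, x \in `]a, b[ -> 0 <= derive1 f x) ->
  {in `]a, b[ &, nondecreasing_fun f}.
Proof.
move=> df f'_ge0 x y; rewrite !in_itv/= => /andP[ax _] /andP[_ yb] xy.
have sub t : x <= t -> t <= y -> t \in `]a, b[.
  by move=> xt ty; rewrite in_itv/= (lt_le_trans ax xt) (le_lt_trans ty yb).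
apply: (@ger0_derive1_ndecr _ f x y) => //.
- by move=> t; rewrite in_itv/= => /andP[xt ty]; apply: df; apply: sub; exact: ltW.
- by move=> t; rewrite in_itv/= => /andP[xt ty]; apply: f'_ge0; apply: sub; exact: ltW.
- apply: derivable_within_continuous => t; rewrite in_itv/= => /andP[xt ty].
  exact/df/sub.
Qed.

Lemma continuous_bounded_itv (R : realType) (f : R -> R) (a b : R) :
  a <= b -> {within `[a, b], continuous f} ->
  exists2 M, 0 <= M & forall t, t \in `[a, b] -> `|f t| <= M.
Proof.
move=> ab cf; have [tM _ fM] := EVT_max ab cf; have [tm _ fm] := EVT_min ab cf.
exists (`|f tM| + `|f tm|) => [|t tab]; first by rewrite addr_ge0.
have := fM t tab; have := fm t tab.
have := ler_norm (f tM); have := ler_norm (- f tm); rewrite normrN.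
have := normr_ge0 (f tM); have := normr_ge0 (f tm).
rewrite ler_norml; lra.
Qed.

Lemma nondecreasing_lbounded_cvg_right (R : realType) (f : R -> R) (a b m : R) :
  a < b -> {in `]a, b[ &, nondecreasing_fun f} ->
  (forall t : R, t \in `]a, b[ -> m <= f t) ->
  cvg (f x @[x --> a^'+]).
Proof.
move=> ab ndf fm; apply: nondecreasing_at_right_is_cvgr.
  near=> s; apply: sub_in2 ndf => t; rewrite !in_itv/= => /andP[-> ts] /=.
  by apply: lt_le_trans ts _; near: s; exact: nbhs_right_le.
near=> s; exists m => _ [t ts <-]; apply: fm; move: ts; rewrite /= !in_itv/=.
move=> /andP[-> ts] /=; apply: lt_le_trans ts _; near: s; exact: nbhs_right_le.
Unshelve. all: by end_near.
Qed.

Lemma nondecreasing_ubounded_cvg_left (R : realType) (f : R -> R) (a b M : R) :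
  a < b -> {in `]a, b[ &, nondecreasing_fun f} ->
  (forall t : R, t \in `]a, b[ -> f t <= M) ->
  cvg (f x @[x --> b^'-]).
Proof.
move=> ab ndf fM; apply: nondecreasing_at_left_is_cvgr.
  near=> s; apply: sub_in2 ndf => t; rewrite !in_itv/= => /andP[st ->].
  by rewrite andbT; apply: le_lt_trans st; near: s; exact: nbhs_left_ge.
near=> s; exists M => _ [t ts <-]; apply: fM; move: ts; rewrite /= !in_itv/=.
move=> /andP[st ->]; rewrite andbT; apply: le_lt_trans st; near: s; exact: nbhs_left_ge.
Unshelve. all: by end_near.
Qed.

Section RiccatiBoundaryLimits.
Variables (R : realType) (h q z : R -> R) (c A Q : R).
Hypothesis q_gt0 : forall t : R, t \in `]0, 1[ -> 0 < q t.
Hypothesis q_le : forall t : R, t \in `]0, 1[ -> q t <= Q.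
Hypotheses (A_ge0 : 0 <= A) (Q_ge0 : 0 <= Q).
Hypothesis hc_le : forall t : R, t \in `]0, 1[ -> `|h t - c| <= A.
Hypothesis z_ode : forall t : R, t \in `]0, 1[ -> is_derive t 1 z (h t - c - q t / z t).
Hypothesis z_lt0 : forall t : R, t \in `]0, 1[ -> z t < 0.

Definition drifted t := z t + A * t.
Definition energy t := (1 + z t ^+ 2) * expR ((A + 2 * Q) * t).

(* The drift absorbs h - c while -q/z > 0, so z + A t is nondecreasing. *)
Lemma drifted_nondecreasing : {in `]0, 1[ &, nondecreasing_fun drifted}.
Proof.
have dlin (t : R) : is_derive t 1 (fun s : R => A * s) A.
  by have := is_deriveZ A (is_derive_id t 1); rewrite /GRing.scale /= mulr1.
have dg (t : R) : t \in `]0, 1[ -> is_derive t 1 drifted (h t - c - q t / z t + A).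
  by move=> t01; have := is_deriveD (z_ode t01) (dlin t).
apply: derive1_ge0_nondecreasing => t t01; first by have [] := dg t t01.
have dgt := dg t t01; rewrite derive1E derive_val.
have qz : 0 < - (q t / z t) by rewrite -mulrN pmulr_rgt0 ?q_gt0 // oppr_gt0 invr_lt0 z_lt0.
have := hc_le t01; rewrite ler_norml; lra.
Qed.

(* The exponential weight absorbs the terms of the energy derivative. *)
Lemma energy_nondecreasing : {in `]0, 1[ &, nondecreasing_fun energy}.
Proof.
have de (t : R) : t \in `]0, 1[ -> is_derive t 1 energy
    (expR ((A + 2 * Q) * t) * ((A + 2 * Q) * (1 + z t ^+ 2)
       + 2 * z t * (h t - c - q t / z t))).
  by move=> t01; exact: is_derive_energy (z_ode t01).
apply: derive1_ge0_nondecreasing => t t01; first by have [] := de t t01.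
have det := de t t01; rewrite derive1E derive_val mulr_ge0 ?expR_ge0 //.
by apply: energy_rate_ge0; rewrite ?z_lt0 ?hc_le ?q_le ?ltW ?q_gt0.
Qed.

(* The energy dominates |z|, so z is bounded below on ]0, s] by - energy s. *)
Lemma z_lower_bound (s t : R) : t \in `]0, 1[ -> s \in `]0, 1[ -> t <= s ->
  - energy s <= z t.
Proof.
move=> t01 s01 ts; rewrite lerNl.
apply: le_trans (energy_nondecreasing t01 s01 ts).
have e1 : 1 <= expR ((A + 2 * Q) * t).
  apply: le_trans (expR_ge1Dx _); rewrite lerDl mulr_ge0 ?addr_ge0 ?mulr_ge0 //.
  by move: t01; rewrite in_itv/= => /andP[/ltW].
have sq : 0 <= (z t + 2^-1) ^+ 2 by exact: sqr_ge0.
have : 1 + z t ^+ 2 <= energy t by rewrite /energy ler_peMr // addr_ge0 ?sqr_ge0.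
move: sq; rewrite !expr2; nra.
Qed.

(* Near 0 the drifted function is bounded below by the energy bound at 1/2. *)
Lemma drifted_cvg_at_0 : cvg (drifted x @[x --> 0^'+]).
Proof.
have half01 : (2^-1 : R) \in `]0, 1[.
  by rewrite in_itv/= invr_gt0 ltr0n invf_lt1 ?ltr0n ?ltr1n.
have sub (t : R) : t \in `]0, 2^-1[ -> t \in `]0, 1[.
  by apply: subitvP; rewrite subitvE /= lexx ltW //; move: half01; rewrite in_itv/= => /andP[].
apply: (@nondecreasing_lbounded_cvg_right _ _ 0 2^-1 (- energy 2^-1)).
- by rewrite invr_gt0 ltr0n.
- by apply: sub_in2 drifted_nondecreasing.
move=> t t0h; have t01 := sub t t0h.
apply: le_trans (z_lower_bound t01 half01 _) _.
  by move: t0h; rewrite in_itv/= => /andP[_ /ltW].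
by rewrite /drifted lerDl mulr_ge0 //; move: t01; rewrite in_itv/= => /andP[/ltW].
Qed.

(* Near 1 the drifted function is bounded above by A, since z < 0. *)
Lemma drifted_cvg_at_1 : cvg (drifted x @[x --> 1^'-]).
Proof.
apply: (@nondecreasing_ubounded_cvg_left _ _ 0 1 A ltr01 drifted_nondecreasing).
move=> t t01; have t1 : t <= 1 by move: t01; rewrite in_itv/= => /andP[_ /ltW].
have := z_lt0 t01; have := ler_wpM2l A_ge0 t1; rewrite /drifted; lra.
Qed.

(* z = drifted - A t has limits at both ends, nonpositive since z < 0. *)
Lemma z_boundary_limits : exists l0 l1 : R,
  [/\ l0 <= 0, l1 <= 0, z x @[x --> 0^'+] --> l0 & z x @[x --> 1^'-] --> l1].
Proof.
have zE : z = drifted - (fun t => A * t) by apply/funext => t; rewrite /drifted /= addrK.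
have z0 : cvg (z x @[x --> 0^'+]).
  rewrite zE; apply: is_cvgB drifted_cvg_at_0 _.
  by apply: cvgP; apply: cvg_at_right_filter; exact: cvgM (cvg_cst A) cvg_id.
have z1 : cvg (z x @[x --> 1^'-]).
  rewrite zE; apply: is_cvgB drifted_cvg_at_1 _.
  by apply: cvgP; apply: cvg_at_left_filter; exact: cvgM (cvg_cst A) cvg_id.
exists (lim (z x @[x --> 0^'+])), (lim (z x @[x --> 1^'-])); split => //.
- apply: limr_le z0 _; near=> t; apply/ltW/z_lt0; rewrite in_itv/=.
  by apply/andP; split; near: t; [exact: nbhs_right_gt | exact: nbhs_right_lt].
- apply: limr_le z1 _; near=> t; apply/ltW/z_lt0; rewrite in_itv/=.
  by apply/andP; split; near: t; [exact: nbhs_left_gt | exact: nbhs_left_lt].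
Unshelve. all: by end_near.
Qed.

End RiccatiBoundaryLimits.

(* The bounds A, Q of the section come from boundedness of h and q on [0, 1]. *)
Theorem lemma3p1 (R : realType) (h q z : R -> R) (c : R) :
  {within `[0, 1], continuous h} ->
  {within `[0, 1], continuous q} ->
  (forall x : R, x \in `]0, 1[ -> 0 < q x) ->
  (forall x : R, x \in `]0, 1[ -> derivable z x 1) ->
  {in `]0, 1[, continuous (derive1 z)} ->
  (forall x : R, x \in `]0, 1[ -> (derive1 z) x = h x - c - q x / z x) ->
  (forall x : R, x \in `]0, 1[ -> z x < 0) ->
  exists l0 l1 : R,
    [/\ l0 <= 0, l1 <= 0,
        z x @[x --> 0^'+] --> l0 &
        z x @[x --> 1^'-] --> l1].
Proof.
move=> ch cq q_gt0 dz _ z' z_lt0.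
have closed01 (t : R) : t \in `]0, 1[ -> t \in `[0, 1].
  by rewrite !in_itv/= => /andP[t0 t1]; rewrite !ltW.
have [Mh Mh0 hMh] := continuous_bounded_itv ler01 ch.
have [Mq Mq0 qMq] := continuous_bounded_itv ler01 cq.
apply: (@z_boundary_limits R h q z c (Mh + `|c|) Mq) => //.
- by move=> t /closed01/qMq; apply: le_trans (ler_norm _).
- by rewrite addr_ge0.
- by move=> t /closed01/hMh hM; rewrite (le_trans (ler_normB _ _)) ?lerD.
- by move=> t t01; rewrite -z' // derive1E; exact: derivableP (dz t t01).
Qed.
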